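(* $\mathcal{M}_7=\{1,2,6,7,14,294,12642\}$ and $\mathcal{M}_{43}=\{1,2,6,42,43,86,258,77658\}$.
   Context: For positive integers $k,n$ let $S_k(n)=\sum_{i=1}^{n} i^k$. For an integer $a$, $\mathcal{M}_a$ denotes the set of positive integers $n$ such that $S_n(n)\equiv a\pmod{n}$. *)

From mathcomp Require Import all_boot.
Set Implicit Arguments. Unset Strict Implicit. Unset Printing Implicit Defensive.

Definition S (k n : nat) : nat := \sum_(1 <= i < n.+1) i ^ k.

Definition inM (a n : nat) : Prop := 0 < n /\ S n n = a %[mod n].


(* Let a be prime and S_n(n) = a (mod n). Since i |-> i^n is m-periodic modulo m, every m | n
   gives a = (n/m) S_n(m) (mod m); combined with S_e(q) = 0 or -1 (mod q) for a prime q
   (according as q-1 does not or does divide e), this shows that n is squarefree apart from a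
   possible factor a^2, and that q-1 | n for every prime q | n other than a.  By induction on q,
   the primes dividing n can then only be 2, 3, 7, 43 and, for a = 43, 77659 = 2*3*7*43^2 + 1;
   the latter is excluded because it would have to divide 43 + n/77659.  Hence n divides
   12642 = 2*3*7^2*43 (a = 7) or 77658 = 2*3*7*43^2 (a = 43), whose divisors are checked by
   computation. *)

From Stdlib Require Import ZArith Zpow_facts.
From mathcomp Require Import all_boot all_algebra all_field.
Import GRing.Theory.
Set Implicit Arguments. Unset Strict Implicit. Unset Printing Implicit Defensive.

Lemma S_mul_mod e k t : S e (k * t) = t * S e k %[mod k].
Proof.
elim: t => [|t IHt]; first by rewrite muln0 /S big_geq.
have block : \sum_((k * t).+1 <= i < (k + k * t).+1) i ^ e = S e k %[mod k].
  rewrite -[(k * t).+1]add1n -[(k + k * t).+1]addSn big_addn addnK -modn_summ /S.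
  rewrite -[in RHS]modn_summ; congr (_ %% _); apply: eq_bigr => i _.
  by rewrite -[in LHS]modnXm [i + _]addnC [k * t]mulnC modnMDl modnXm.
rewrite /S mulnS (big_cat_nat _ (n := (k * t).+1)) //=; last by rewrite ltnS leq_addl.
by rewrite -modnDm IHt block modnDm mulSn addnC.
Qed.

Lemma S_dvd_mod e m n : m %| n -> S e n = n %/ m * S e m %[mod m].
Proof. by move=> /divnK {1}<-; rewrite mulnC S_mul_mod. Qed.

Section SumPowPrime.
Variable q : nat.
Hypothesis q_pr : prime q.
Local Notation F := 'F_q.

Lemma S_prime_Fp e : 0 < e -> ((S e q)%:R : F)%R = (\sum_(x : F) x ^+ e)%R.
Proof.
move=> e_gt0; rewrite /S natr_sum big_nat_recr ?prime_gt0 //=.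
rewrite natrX (pchar_Fp_0 q_pr) expr0n eqn0Ngt e_gt0 /= addr0.
have -> : (\sum_(1 <= i < q) ((i ^ e)%:R : F) = \sum_(0 <= i < q) (i%:R : F) ^+ e)%R.
  rewrite [in RHS]big_ltn ?prime_gt0 // expr0n eqn0Ngt e_gt0 /= add0r.
  by apply: eq_bigr => i _; rewrite natrX.
transitivity (\sum_(0 <= i < (Zp_trunc (pdiv q)).+2) (i%:R : F) ^+ e)%R.
  by rewrite [X in _ = (\sum_(0 <= i < X) _)%R]Fp_cast.
by rewrite big_mkord; apply: eq_bigr => i _; rewrite natr_Zp.
Qed.

Lemma Fp_expf_pred (c : F) : c != 0%R -> (c ^+ q.-1 = 1)%R.
Proof.
move=> c_neq0; apply: (mulfI c_neq0); rewrite mulr1 -exprS prednK ?prime_gt0 //.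
by have := expf_card c; rewrite (card_Fp q_pr).
Qed.

(* If the sum s were nonzero, rescaling the sum by c would force c ^+ e = 1 for
   every unit c, hence c ^+ (e %% q.-1) = 1: too many roots for 'X^(e %% q.-1) - 1. *)
Lemma prime_dvd_S e : 0 < e -> ~~ (q.-1 %| e) -> q %| S e q.
Proof.
move=> e_gt0 e_ndvd; rewrite (dvdn_pcharf (pchar_Fp q_pr)) S_prime_Fp //.
set s := (\sum_(x : F) x ^+ e)%R; apply/negPn/negP => s_neq0.
have units_e : forall c : F, c != 0%R -> (c ^+ e = 1)%R.
  move=> c c_neq0; apply: (mulIf s_neq0); rewrite mul1r /s mulr_sumr.
  rewrite [in RHS](reindex_inj (mulfI c_neq0)) /=.
  by apply: eq_bigr => x _; rewrite exprMn.
set r := e %% q.-1.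
have q1_gt0 : 0 < q.-1 by rewrite -ltnS prednK ?prime_gt0 ?prime_gt1.
have r_gt0 : 0 < r by rewrite lt0n.
have units_r : forall c : F, c != 0%R -> (c ^+ r = 1)%R.
  move=> c c_neq0; rewrite -(units_e c c_neq0) [in RHS](divn_eq e q.-1).
  by rewrite exprD mulnC exprM Fp_expf_pred // expr1n mul1r.
have p_neq0 : ('X^r - 1 : {poly F})%R != 0%R by rewrite -size_poly_eq0 size_XnsubC.
have := max_poly_roots p_neq0 (rs := enum (predC1 (0%R : F))).
rewrite enum_uniq size_XnsubC // -cardE cardC1 card_Fp // ltnS.
have -> : all (root ('X^r - 1)%R) (enum (predC1 (0%R : F))).
  by apply/allP => c; rewrite mem_enum /= => c_neq0; rewrite rootE !hornerE units_r // subrr.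
by move=> /(_ isT isT); rewrite leqNgt ltn_pmod.
Qed.

Lemma prime_dvd_S_addn1 e : 0 < e -> q.-1 %| e -> q %| S e q + 1.
Proof.
move=> e_gt0 e_dvd; rewrite (dvdn_pcharf (pchar_Fp q_pr)) natrD S_prime_Fp //.
rewrite (bigD1 0%R) //= expr0n eqn0Ngt e_gt0 /= add0r.
have -> : (\sum_(x : F | x != 0%R) x ^+ e = \sum_(x : F | x != 0%R) 1)%R.
  apply: eq_bigr => x x_neq0; case/dvdnP: e_dvd => k ->.
  by rewrite mulnC exprM Fp_expf_pred // expr1n.
rewrite sumr_const -natrD -[#|_|]/#|predC1 (0%R : F)| cardC1 card_Fp //.
by rewrite addn1 prednK ?prime_gt0 // pchar_Fp_0.
Qed.

End SumPowPrime.

Section SelfPowerSumResidue.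
Variables a n : nat.
Hypotheses (a_pr : prime a) (n_gt0 : 0 < n) (Snn_mod : S n n = a %[mod n]).

Lemma a_mod_divisor m : m %| n -> a = n %/ m * S n m %[mod m].
Proof. by move=> m_dvd; rewrite -(modn_dvdm _ m_dvd) -Snn_mod (modn_dvdm _ m_dvd) S_dvd_mod. Qed.

Lemma prime_dvd_a q : prime q -> q %| a -> q = a.
Proof. by move=> q_pr; rewrite dvdn_prime2 // => /eqP. Qed.

Lemma prime_sq_dvd q : prime q -> q ^ 2 %| n -> q = a.
Proof.
move=> q_pr /dvdnP [k n_eq].
have q_dvd : q %| n by rewrite n_eq expnS mulnCA dvdn_mulr.
have q_dvd_quot : q %| n %/ q.
  by rewrite n_eq expnS expn1 mulnCA mulKn ?prime_gt0 // dvdn_mull.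
apply: prime_dvd_a => //.
by rewrite /dvdn (a_mod_divisor q_dvd) -modnMml (eqP q_dvd_quot) mul0n mod0n.
Qed.

Lemma pfactor3_ndvd : ~~ (a ^ 3 %| n).
Proof.
apply/negP => /dvdnP [k n_eq].
have a_gt1 := prime_gt1 a_pr; have a_gt0 := prime_gt0 a_pr.
have sq_dvd : a ^ 2 %| n by rewrite n_eq dvdn_mull // (expnS a 2) dvdn_mull.
have a_dvd_quot : a %| n %/ a ^ 2.
  by rewrite n_eq (expnS a 2) mulnA mulnK ?expn_gt0 ?a_gt0 // dvdn_mull.
have a_dvd_S : a %| S n (a ^ 2).
  by rewrite /dvdn (expnS a 1) expn1 S_mul_mod -modnMml modnn mul0n mod0n.
have : a ^ 2 %| a.
  by rewrite /dvdn (a_mod_divisor sq_dvd) -/(dvdn _ _) (expnS a 1) expn1 dvdn_mul.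
by move/(dvdn_leq a_gt0); rewrite (expnS a 1) expn1 leqNgt ltn_Pmulr.
Qed.

Lemma pred_prime_dvd q : prime q -> q %| n -> q != a -> q.-1 %| n.
Proof.
move=> q_pr q_dvd q_neq; apply/negPn/negP => q1_ndvd.
have /eqP S_mod := prime_dvd_S q_pr n_gt0 q1_ndvd.
apply: (negP q_neq); apply/eqP; apply: (prime_dvd_a q_pr).
by rewrite /dvdn (a_mod_divisor q_dvd) -modnMmr S_mod muln0 mod0n.
Qed.

Lemma prime_dvd_addn_quot q : prime q -> q %| n -> q != a -> q %| a + n %/ q.
Proof.
move=> q_pr q_dvd q_neq.
have S_mod := prime_dvd_S_addn1 q_pr n_gt0 (pred_prime_dvd q_pr q_dvd q_neq).
rewrite /dvdn -modnDml (a_mod_divisor q_dvd) modnDml -{2}[n %/ q]muln1 -mulnDr.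
by rewrite -modnMmr (eqP S_mod) muln0 mod0n.
Qed.

Lemma logn_le p : prime p -> logn p n <= (p == a).+1.
Proof.
move=> p_pr; case: eqP => [->|p_neq].
  by rewrite leqNgt -(pfactor_dvdn 3 a_pr n_gt0) pfactor3_ndvd.
rewrite leqNgt -(pfactor_dvdn 2 p_pr n_gt0); apply/negP => sq_dvd.
exact/p_neq/prime_sq_dvd.
Qed.

Lemma smooth_dvd (A : seq nat) B d : d %| n ->
  (forall p, prime p -> p %| d -> p \in A) ->
  all (fun p => p ^ (p == a).+1 %| B) A -> d %| B.
Proof.
move=> d_dvd d_smooth A_dvd; have d_gt0 := dvdn_gt0 n_gt0 d_dvd.
apply/dvdn_partP => // p; rewrite mem_primes => /and3P [p_pr _ p_dvd].
rewrite p_part; apply: dvdn_trans (allP A_dvd p (d_smooth p p_pr p_dvd)).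
rewrite dvdn_Pexp2l ?prime_gt1 //; apply: leq_trans (logn_le p_pr).
exact: dvdn_leq_log.
Qed.

Lemma smooth_dvd_cons q (A : seq nat) B d : prime q -> q != a ->
  all (fun p => p ^ (p == a).+1 %| B) A -> d %| n ->
  (forall p, prime p -> p %| d -> p \in q :: A) ->
  d %| B \/ exists2 e, e %| B & d = q * e.
Proof.
move=> q_pr q_neq A_dvd d_dvd d_smooth.
have coprime_dvd e : e %| d -> ~~ (q %| e) -> e %| B.
  move=> e_dvd e_ndvd; apply: (smooth_dvd (dvdn_trans e_dvd d_dvd) _ A_dvd) => p p_pr p_dvd.
  have := d_smooth p p_pr (dvdn_trans p_dvd e_dvd); rewrite inE => /orP [/eqP p_eq|//].
  by rewrite -p_eq p_dvd in e_ndvd.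
have [q_dvd|q_ndvd] := boolP (q %| d); last by left; exact: coprime_dvd.
have d_eq : d = d %/ q * q by rewrite divnK.
right; exists (d %/ q); last by rewrite mulnC -d_eq.
apply: coprime_dvd; first by rewrite {2}d_eq dvdn_mulr.
apply/negP => q_dvd_quot; apply/(negP q_neq)/eqP/prime_sq_dvd => //.
by apply: dvdn_trans d_dvd; rewrite d_eq (expnS q 1) expn1 dvdn_mul.
Qed.

Lemma primes_closed (A : seq nat) : a \in A ->
  (forall d, d %| n -> (forall p, prime p -> p %| d -> p \in A) -> prime d.+1 -> d.+1 \in A) ->
  forall q, prime q -> q %| n -> q \in A.
Proof.
move=> a_in A_closed q; elim/ltn_ind: q => q IHq q_pr q_dvd.
have [->//|q_neq] := eqVneq q a.
have q1_dvd := pred_prime_dvd q_pr q_dvd q_neq.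
have q1_gt0 : 0 < q.-1 by rewrite -ltnS prednK ?prime_gt0 ?prime_gt1.
rewrite -(prednK (prime_gt0 q_pr)) A_closed ?prednK ?prime_gt0 // => p p_pr p_dvd.
apply: IHq => //; last exact: dvdn_trans p_dvd q1_dvd.
by apply: leq_ltn_trans (dvdn_leq q1_gt0 p_dvd) _; rewrite prednK ?prime_gt0.
Qed.

End SelfPowerSumResidue.

Lemma eqn_mod_pfactors d x y : 0 < d ->
  (x == y %[mod d]) = all (fun p => x == y %[mod p ^ logn p d]) (primes d).
Proof.
move=> d_gt0; apply/idP/allP => [/eqP xy p _ | xy].
  by apply/eqP; rewrite -(modn_dvdm x (pfactor_dvdnn p d)) xy modn_dvdm // pfactor_dvdnn.
wlog le_yx : x y xy / y <= x.
  move=> W; case/orP: (leq_total y x) => le; first exact: W.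
  by rewrite eq_sym W // => p p_in; rewrite eq_sym xy.
rewrite eqn_mod_dvd //; apply/dvdn_partP => // p p_in.
by rewrite p_part -eqn_mod_dvd // xy.
Qed.

Lemma Z_of_nat_modn x m : 0 < m -> Z.of_nat (x %% m) = Z.modulo (Z.of_nat x) (Z.of_nat m).
Proof.
move=> m_gt0; apply: (Z.mod_unique _ _ (Z.of_nat (x %/ m))).
  by left; split; [exact: Nat2Z.is_nonneg | apply/Nat2Z.inj_lt/ltP/ltn_pmod].
by rewrite {1}(divn_eq x m) Nat2Z.inj_add Nat2Z.inj_mul Z.mul_comm.
Qed.

Lemma Z_of_nat_expn x e : Z.of_nat (x ^ e) = Z.pow (Z.of_nat x) (Z.of_nat e).
Proof.
elim: e => [|e IHe]; first by [].
by rewrite expnS Nat2Z.inj_mul IHe Nat2Z.inj_succ Z.pow_succ_r //; exact: Nat2Z.is_nonneg.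
Qed.

(* Binary integers and [Zpow_mod] keep exponents as large as 77658 cheap to evaluate. *)
Fixpoint sum_pow_modZ (k : nat) (i e m : Z) : Z :=
  if k is k'.+1 then Z.modulo (Zpow_mod i e m + sum_pow_modZ k' (Z.succ i) e m) m else Z0.

Lemma sum_pow_modZE k j e m : 0 < m ->
  sum_pow_modZ k (Z.of_nat j) (Z.of_nat e) (Z.of_nat m)
  = Z.of_nat ((\sum_(j <= i < j + k) i ^ e) %% m).
Proof.
move=> m_gt0; have m_neq0 : Z.of_nat m <> Z0 by case: m m_gt0.
elim: k j => [|k IHk] j /=; first by rewrite addn0 big_geq ?mod0n.
rewrite -Nat2Z.inj_succ IHk addSnnS [in RHS]big_ltn; last by rewrite addnS ltnS leq_addr.
rewrite Zpow_mod_correct // !Z_of_nat_modn // Nat2Z.inj_add Z_of_nat_expn.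
by rewrite Z.add_mod_idemp_l // Z.add_mod_idemp_r.
Qed.

Definition S_mod_part_test (a d m : nat) : bool :=
  d %/ m * Z.to_nat (sum_pow_modZ m (Z.of_nat 1) (Z.of_nat d) (Z.of_nat m)) == a %[mod m].

Lemma S_mod_part_testE a d m : 0 < m -> m %| d ->
  S_mod_part_test a d m = (S d d == a %[mod m]).
Proof.
move=> m_gt0 m_dvd; rewrite /S_mod_part_test sum_pow_modZE // Nat2Z.id add1n.
by rewrite modnMmr -(S_dvd_mod _ m_dvd).
Qed.

(* Testing modulo each prime-power part of d keeps the sums short (at most 43^2 terms). *)
Definition S_mod_test (a d : nat) : bool :=
  all (fun p => S_mod_part_test a d (p ^ logn p d)) (primes d).

Lemma S_mod_testE a d : 0 < d -> S_mod_test a d = (S d d == a %[mod d]).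
Proof.
move=> d_gt0; rewrite eqn_mod_pfactors //; apply: eq_in_all => p.
rewrite mem_primes => /and3P [p_pr _ _].
by rewrite S_mod_part_testE ?expn_gt0 ?prime_gt0 ?pfactor_dvdnn.
Qed.

Lemma inM_iff_filter a B : 0 < B -> (forall n, inM a n -> n %| B) ->
  forall n, inM a n <-> n \in [seq d <- divisors B | S_mod_test a d].
Proof.
move=> B_gt0 inM_dvd n; rewrite mem_filter -dvdn_divisors //; split.
  move=> n_inM; case: (n_inM) => n_gt0 /eqP n_mod.
  by rewrite S_mod_testE // n_mod inM_dvd.
case/andP=> n_test n_dvd; have n_gt0 := dvdn_gt0 B_gt0 n_dvd.
by split=> //; apply/eqP; rewrite -S_mod_testE.
Qed.

(* Stated with residues modulo f, so that certificates only compute with small numbers. *)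
Lemma not_prime_mul_succ q e f : 0 < e -> 1 < f <= q ->
  f %| (q %% f) * (e %% f) + 1 -> ~~ prime (q * e).+1.
Proof.
move=> e_gt0 /andP [f_gt1 f_le] f_dvd; apply/primePn; right; exists f.
  by rewrite f_gt1 ltnS (leq_trans f_le) ?leq_pmulr.
by rewrite /dvdn -addn1 -modnDml -modnMm modnDml.
Qed.

Lemma inM7_dvd n : inM 7 n -> n %| 12642.
Proof.
case=> n_gt0 Snn_mod; have p7 : prime 7 by [].
have B_gt0 : 0 < 12642 by vm_compute.
have B_dvd : all (fun p => p ^ (p == 7).+1 %| 12642) [:: 2; 3; 7; 43] by vm_compute.
have closed : all (fun d => prime d.+1 ==> (d.+1 \in [:: 2; 3; 7; 43])) (divisors 12642).
  by vm_compute.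
apply: (smooth_dvd p7 n_gt0 Snn_mod (dvdnn n) _ B_dvd).
apply: (primes_closed p7 n_gt0 Snn_mod); first by [].
move=> d d_dvd d_smooth d1_pr.
have := smooth_dvd p7 n_gt0 Snn_mod d_dvd d_smooth B_dvd.
by rewrite (dvdn_divisors _ B_gt0) => /(allP closed); rewrite d1_pr.
Qed.

Lemma inM43_dvd n : inM 43 n -> n %| 77658.
Proof.
case=> n_gt0 Snn_mod; have p43 : prime 43 by [].
have p77659 : prime 77659 by vm_compute.
have q_neq : 77659 != 43 by vm_compute.
have B_gt0 : 0 < 77658 by vm_compute.
have B_dvd : all (fun p => p ^ (p == 43).+1 %| 77658) [:: 2; 3; 7; 43] by vm_compute.
have closed : all (fun d => prime d.+1 ==> (d.+1 \in [:: 77659; 2; 3; 7; 43]))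
  (divisors 77658) by vm_compute.
(* Each 77659 * e + 1 with e | 77658 has a factor among these small primes. *)
have composite : all (fun e => has
    (fun f => (1 < f <= 77659) && (f %| 77659 %% f * (e %% f) + 1)) [:: 2; 3; 5; 7; 13; 43])
  (divisors 77658) by vm_compute.
have no_quot : all (fun e => ~~ (77659 %| 43 + e)) (divisors 77658) by vm_compute.
have n_smooth : forall p, prime p -> p %| n -> p \in [:: 77659; 2; 3; 7; 43].
  apply: (primes_closed p43 n_gt0 Snn_mod); first by rewrite !inE eqxx !orbT.
  move=> d d_dvd d_smooth d1_pr.
  case: (smooth_dvd_cons p43 n_gt0 Snn_mod p77659 q_neq B_dvd d_dvd d_smooth)
    => [|[e e_dvd d_eq]].
    by rewrite (dvdn_divisors _ B_gt0) => /(allP closed); rewrite d1_pr.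
  have e_gt0 := dvdn_gt0 B_gt0 e_dvd.
  move: e_dvd; rewrite (dvdn_divisors _ B_gt0) => /(allP composite).
  case/hasP=> f _ /andP [f_range f_dvd].
  by rewrite d_eq (negbTE (not_prime_mul_succ e_gt0 f_range f_dvd)) in d1_pr.
case: (smooth_dvd_cons p43 n_gt0 Snn_mod p77659 q_neq B_dvd (dvdnn n) n_smooth)
  => [//|[e e_dvd n_eq]].
have q_dvd : 77659 %| n by rewrite n_eq dvdn_mulr.
have := prime_dvd_addn_quot p43 n_gt0 Snn_mod p77659 q_dvd q_neq.
rewrite n_eq (mulKn _ (prime_gt0 p77659)); move: e_dvd.
by rewrite (dvdn_divisors _ B_gt0) => /(allP no_quot) /negbTE ->.
Qed.

Lemma M7_divisors : [seq d <- divisors 12642 | S_mod_test 7 d] = [:: 1; 2; 6; 7; 14; 294; 12642].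
Proof. by apply/eqP; vm_compute. Qed.

Lemma M43_divisors :
  [seq d <- divisors 77658 | S_mod_test 43 d] = [:: 1; 2; 6; 42; 43; 86; 258; 77658].
Proof. by apply/eqP; vm_compute. Qed.

Theorem mainTheorem9 :
  (forall n : nat, inM 7 n <-> n \in [:: 1; 2; 6; 7; 14; 294; 12642]) /\
  (forall n : nat, inM 43 n <-> n \in [:: 1; 2; 6; 42; 43; 86; 258; 77658]).
Proof.
have B7_gt0 : 0 < 12642 by vm_compute.
have B43_gt0 : 0 < 77658 by vm_compute.
rewrite -M7_divisors -M43_divisors.
by split; [exact: (inM_iff_filter B7_gt0 inM7_dvd) | exact: (inM_iff_filter B43_gt0 inM43_dvd)].
Qed.
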